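(* If $C$ is an $(n,k)$ linear code over $H(\mathbb{Z})_{2+e_1+e_2+e_3}$ correcting all errors of Lipschitz weight $2$ or less, then $(7^2)^{n-k}\ge 32n^2+1$. If $C$ is an $(n,k)$ linear code over $H(\mathbb{Z})_{3+e_1+e_2}$ correcting all errors of Lipschitz weight $2$ or less, then $(11^2)^{n-k}\ge 32n^2+1$.
   Context: $H(\mathbb{Z})=\{a_0+a_1e_1+a_2e_2+a_3e_3:a_i\in\mathbb{Z}\}$ (Lipschitz integers) with quaternion multiplication $e_1^2=e_2^2=e_3^2=-1$, $e_1e_2=-e_2e_1=e_3$, $e_3e_1=-e_1e_3=e_2$, $e_2e_3=-e_3e_2=e_1$; $N(q)=a_0^2+a_1^2+a_2^2+a_3^2$. Right congruence: $q_1\equiv_r q_2 \pmod\pi$ iff $q_1-q_2=\delta\pi$ for some $\delta\in H(\mathbb{Z})$; $H(\mathbb{Z})_\pi=H(\mathbb{Z})/H(\mathbb{Z})\pi$, which has $N(\pi)^2$ elements (here $N(2+e_1+e_2+e_3)=7$, $N(3+e_1+e_2)=11$). The Lipschitz weight of a class $\gamma$ is $\min\{|a_0|+|a_1|+|a_2|+|a_3| : a_0+a_1e_1+a_2e_2+a_3e_3\in\gamma\}$; the weight of a vector is the sum of the weights of its components. An $(n,k)$ linear code over $H(\mathbb{Z})_\pi$ is an additive subgroup $C\subseteq H(\mathbb{Z})_\pi^n$ such that $H(\mathbb{Z})_\pi^n/C$ has exactly $(N(\pi)^2)^{n-k}$ cosets. $C$ corrects all errors of weight $t$ or less if all vectors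 of Lipschitz weight at most $t$ lie in pairwise distinct cosets of $C$. *)

From HB Require Import structures.
From mathcomp Require Import all_boot all_order all_algebra.
Set Implicit Arguments. Unset Strict Implicit. Unset Printing Implicit Defensive.
Import Order.TTheory GRing.Theory Num.Theory.
Local Open Scope ring_scope.

(** A Lipschitz integer a0 + a1 e1 + a2 e2 + a3 e3 with a_i in Z. *)
Record lip := Lip { c0 : int; c1 : int; c2 : int; c3 : int }.

Definition lip0 : lip := Lip 0 0 0 0.
Definition lip_add (p q : lip) : lip :=
  Lip (c0 p + c0 q) (c1 p + c1 q) (c2 p + c2 q) (c3 p + c3 q).
Definition lip_opp (p : lip) : lip := Lip (- c0 p) (- c1 p) (- c2 p) (- c3 p).
Definition lip_sub (p q : lip) : lip := lip_add p (lip_opp q).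

(** Hamilton product: e1^2=e2^2=e3^2=-1, e1e2=e3, e2e3=e1, e3e1=e2. *)
Definition lip_mul (a b : lip) : lip :=
  Lip (c0 a * c0 b - c1 a * c1 b - c2 a * c2 b - c3 a * c3 b)
      (c0 a * c1 b + c1 a * c0 b + c2 a * c3 b - c3 a * c2 b)
      (c0 a * c2 b - c1 a * c3 b + c2 a * c0 b + c3 a * c1 b)
      (c0 a * c3 b + c1 a * c2 b - c2 a * c1 b + c3 a * c0 b).

Definition lip_l1 (q : lip) : nat :=
  (absz (c0 q) + absz (c1 q) + absz (c2 q) + absz (c3 q))%N.

Definition rcongr (pi q1 q2 : lip) : Prop :=
  exists delta : lip, lip_sub q1 q2 = lip_mul delta pi.

Definition class_weight (pi q : lip) (w : nat) : Prop :=
  (exists q', rcongr pi q' q /\ lip_l1 q' = w) /\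
  (forall q', rcongr pi q' q -> (w <= lip_l1 q')%N).

(** Vectors of H(Z)_pi^n are represented by vectors of representatives in H(Z)^n;
    two such vectors denote the same element iff they are componentwise congruent. *)
Definition vec (n : nat) := 'I_n -> lip.
Definition vzero n : vec n := fun _ => lip0.
Definition vadd n (x y : vec n) : vec n := fun i => lip_add (x i) (y i).
Definition vopp n (x : vec n) : vec n := fun i => lip_opp (x i).
Definition vsub n (x y : vec n) : vec n := fun i => lip_sub (x i) (y i).
Definition vcongr (pi : lip) n (x y : vec n) : Prop := forall i, rcongr pi (x i) (y i).

Definition vweight_le (pi : lip) n (x : vec n) (t : nat) : Prop :=
  exists w : 'I_n -> nat, (forall i, class_weight pi (x i) (w i)) /\
                          (\sum_(i < n) w i <= t)%N.

(** A subset C of H(Z)_pi^n, given by a predicate on representatives which is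
    invariant under congruence. *)
Definition well_defined (pi : lip) n (C : vec n -> Prop) : Prop :=
  forall x y, vcongr pi x y -> C x -> C y.

Definition additive_subgroup n (C : vec n -> Prop) : Prop :=
  [/\ C (@vzero n), (forall x y, C x -> C y -> C (vadd x y)) &
      (forall x, C x -> C (vopp x))].

Definition num_cosets n (C : vec n -> Prop) (m : nat) : Prop :=
  exists reps : seq (vec n),
    [/\ size reps = m,
        (forall i j, (i < m)%N -> (j < m)%N -> i <> j ->
            ~ C (vsub (nth (@vzero n) reps i) (nth (@vzero n) reps j))) &
        (forall x, exists2 i, (i < m)%N & C (vsub x (nth (@vzero n) reps i)))].

(** (n,k) linear code over H(Z)_pi, where Npi = N(pi). *)
Definition linear_code (pi : lip) (Npi : nat) n k (C : vec n -> Prop) : Prop :=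
  [/\ well_defined pi C, additive_subgroup C & num_cosets C ((Npi ^ 2) ^ (n - k))%N].

Definition corrects (pi : lip) n (C : vec n -> Prop) (t : nat) : Prop :=
  forall x y, vweight_le pi x t -> vweight_le pi y t ->
    ~ vcongr pi x y -> ~ C (vsub x y).

Definition pi7 : lip := Lip 2 1 1 1.
Definition pi11 : lip := Lip 3 1 1 0.

From HB Require Import structures.
From mathcomp Require Import all_boot all_order all_algebra ring zify.
From Stdlib Require Import IndefiniteDescription.
Set Implicit Arguments. Unset Strict Implicit. Unset Printing Implicit Defensive.
Import GRing.Theory Num.Theory.
Local Open Scope ring_scope.

(* 1. Small vectors are distinct classes.  The quaternion norm is multiplicative,
      so if a == b (mod pi) then N(pi) divides N(a - b).  When
      |a|_1 + |b|_1 <= 4 we have |a - b|_1 <= 4, and a finite check shows that no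
      nonzero sum of four squares with entries of total size <= 4 is divisible
      by 7 or 11; hence a = b.  In particular an element of H(Z) of L1-norm at
      most 2 has Lipschitz weight equal to its L1-norm.
   2. Packing.  If a linear code with m cosets corrects all errors of weight <= t,
      then any family of pairwise non-congruent vectors of weight <= t lies in
      pairwise distinct cosets, so it has at most m members.
   3. Error patterns.  We exhibit 32 n^2 + 1 vectors of weight <= 2: the zero
      vector, the 32 elements of L1-norm 2 placed at one coordinate, and pairs of
      units (8 * 8 choices) placed at two distinct coordinates, the latter
      indexed by ordered pairs of positions with 32 choices each.  By step 1
      distinct patterns are non-congruent, and step 2 gives the theorem. *)

Definition lip_tuple (x : lip) : int * int * int * int := (c0 x, c1 x, c2 x, c3 x).
Definition tuple_lip (t : int * int * int * int) : lip :=
  let: (a0, a1, a2, a3) := t in Lip a0 a1 a2 a3.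
Lemma lip_tupleK : cancel lip_tuple tuple_lip. Proof. by case. Qed.
HB.instance Definition _ := Equality.copy lip (can_type lip_tupleK).

Definition lip_norm (x : lip) : int := c0 x ^+ 2 + c1 x ^+ 2 + c2 x ^+ 2 + c3 x ^+ 2.

(* The norm is multiplicative; this is the only algebraic input of the proof. *)
Lemma lip_normM a b : lip_norm (lip_mul a b) = lip_norm a * lip_norm b.
Proof. rewrite /lip_norm /=; ring. Qed.

Lemma small_sum_of_squares (a0 a1 a2 a3 : nat) :
  (a0 + a1 + a2 + a3 <= 4)%N ->
  (7 %| a0 ^ 2 + a1 ^ 2 + a2 ^ 2 + a3 ^ 2)%N || (11 %| a0 ^ 2 + a1 ^ 2 + a2 ^ 2 + a3 ^ 2)%N ->
  (a0 ^ 2 + a1 ^ 2 + a2 ^ 2 + a3 ^ 2 = 0)%N.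
Proof.
pose ok a0 a1 a2 a3 := let s := (a0 ^ 2 + a1 ^ 2 + a2 ^ 2 + a3 ^ 2)%N in
  (a0 + a1 + a2 + a3 <= 4)%N ==> (7 %| s)%N || (11 %| s)%N ==> (s == 0%N).
have check : all (fun a0 => all (fun a1 => all (fun a2 =>
  all (ok a0 a1 a2) (iota 0 5)) (iota 0 5)) (iota 0 5)) (iota 0 5) by exact: isT.
have in5 a : (a <= 4)%N -> a \in iota 0 5 by rewrite mem_iota.
move=> small; have : ok a0 a1 a2 a3.
  have [b0 b1 b2 b3] : [/\ a0 <= 4, a1 <= 4, a2 <= 4 & a3 <= 4]%N by split; lia.
  exact: allP (allP (allP (allP check a0 (in5 _ b0)) a1 (in5 _ b1)) a2 (in5 _ b2)) a3 (in5 _ b3).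
by move=> /implyP/(_ small)/implyP divisible /divisible /eqP.
Qed.

Lemma sqr_absz (x : int) : (`|x| ^ 2)%N%:Z = x ^+ 2.
Proof. nia. Qed.

Lemma lip_small_multiple (x : lip) : (lip_l1 x <= 4)%N ->
  (7 %| lip_norm x)%Z || (11 %| lip_norm x)%Z -> x = lip0.
Proof.
case: x => x0 x1 x2 x3; rewrite /lip_l1 /= => small.
have -> : lip_norm (Lip x0 x1 x2 x3) =
    (`|x0| ^ 2 + `|x1| ^ 2 + `|x2| ^ 2 + `|x3| ^ 2)%N%:Z.
  by rewrite /lip_norm /= !PoszD !sqr_absz.
move=> /(small_sum_of_squares small) /eqP.
rewrite !addn_eq0 !expn_eq0 !absz_eq0 !andbT.
by case/andP=> /andP[/andP[/eqP-> /eqP->] /eqP->] /eqP->.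
Qed.

Lemma lip_sub_eq0 a b : lip_sub a b = lip0 -> a = b.
Proof.
by case: a b => a0 a1 a2 a3 [b0 b1 b2 b3] [] /subr0_eq-> /subr0_eq-> /subr0_eq-> /subr0_eq->.
Qed.

Lemma lip_l1_sub a b : (lip_l1 (lip_sub a b) <= lip_l1 a + lip_l1 b)%N.
Proof. rewrite /lip_l1 /=; lia. Qed.

(* The moduli of the theorem: 2+e1+e2+e3 and 3+e1+e2 have norms 7 and 11. *)
Definition norm_7_or_11 (pi : lip) : Prop := lip_norm pi = 7 \/ lip_norm pi = 11.

(* Step 1: two right-congruent Lipschitz integers of total L1-norm at most 4
   are equal, since N(pi) divides the norm of their difference. *)
Lemma rcongr_small_eq pi a b : norm_7_or_11 pi -> rcongr pi a b ->
  (lip_l1 a + lip_l1 b <= 4)%N -> a = b.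
Proof.
move=> norm_pi [delta eq_ab] small; apply: lip_sub_eq0; apply: lip_small_multiple.
  exact: leq_trans (lip_l1_sub a b) small.
rewrite eq_ab lip_normM; apply/orP.
by case: norm_pi => ->; [left | right]; apply: dvdz_mull.
Qed.

Lemma rcongr_refl pi x : rcongr pi x x.
Proof. by exists lip0; rewrite /lip_sub /lip_add /lip_opp /lip_mul /=; congr Lip; ring. Qed.

Lemma class_weight_small pi x : norm_7_or_11 pi -> (lip_l1 x <= 2)%N ->
  class_weight pi x (lip_l1 x).
Proof.
move=> norm_pi small; split; first by exists x; split=> //; apply: rcongr_refl.
move=> y congr_yx; rewrite leqNgt; apply/negP=> lt_yx.
have eq_yx : y = x by apply: (rcongr_small_eq norm_pi congr_yx); lia.
by rewrite eq_yx ltnn in lt_yx.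
Qed.

Section Cosets.
Variables (pi : lip) (n : nat) (C : vec n -> Prop).
Hypotheses (C_wd : well_defined pi C) (C_group : additive_subgroup C).

Lemma same_coset_sub x y r : C (vsub x r) -> C (vsub y r) -> C (vsub x y).
Proof.
case: C_group => _ C_add C_opp Cx Cy.
apply: C_wd (C_add _ _ Cx (C_opp _ Cy)) => i.
have -> : vadd (vsub x r) (vopp (vsub y r)) i = vsub x y i.
  by rewrite /vadd /vopp /vsub /lip_sub /lip_add /lip_opp /=; congr Lip; ring.
exact: rcongr_refl.
Qed.

(* A family whose members lie in pairwise distinct cosets has at most as many
   members as there are cosets (pigeonhole on a choice of coset index). *)
Lemma distinct_cosets_card (T : finType) (f : T -> vec n) m :
  num_cosets C m -> (forall s t, C (vsub (f s) (f t)) -> s = t) -> (#|T| <= m)%N.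
Proof.
case=> reps [_ _ covered] f_sep.
have coset s : {i : 'I_m | C (vsub (f s) (nth (@vzero n) reps i))}.
  apply: constructive_indefinite_description.
  by have [i lt_im Ci] := covered (f s); exists (Ordinal lt_im).
pose idx s : 'I_m := sval (coset s).
have idx_inj : injective idx.
  move=> s t eq_st; apply: f_sep.
  have Ct := svalP (coset t); rewrite -[sval _]eq_st in Ct.
  exact: same_coset_sub (svalP (coset s)) Ct.
by rewrite -[m]card_ord; apply: leq_card idx_inj.
Qed.
End Cosets.

Lemma packing_bound pi Npi n k (C : vec n -> Prop) t (T : finType) (f : T -> vec n) :
  linear_code pi Npi k C -> corrects pi C t ->
  (forall s, vweight_le pi (f s) t) ->
  (forall s s', vcongr pi (f s) (f s') -> s = s') ->
  (#|T| <= (Npi ^ 2) ^ (n - k))%N.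
Proof.
case=> C_wd C_group C_cosets C_corr f_weight f_inj.
apply: (distinct_cosets_card C_wd C_group C_cosets) => s s' Cf.
have [// | ne_ss'] := eqVneq s s'.
case: (C_corr _ _ (f_weight s) (f_weight s') _ Cf) => /f_inj eq_ss'.
by rewrite eq_ss' eqxx in ne_ss'.
Qed.

Definition lip_units : seq lip :=
  [:: Lip 1 0 0 0; Lip 0 1 0 0; Lip 0 0 1 0; Lip 0 0 0 1;
      Lip (-1) 0 0 0; Lip 0 (-1) 0 0; Lip 0 0 (-1) 0; Lip 0 0 0 (-1)].

Definition weight_two : seq lip :=
  [seq z <- undup [seq lip_add x y | x <- lip_units, y <- lip_units] | z != lip0].

Lemma lip_units_spec :
  [/\ size lip_units = 8%N, uniq lip_units & all (fun x => lip_l1 x == 1%N) lip_units].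
Proof. by []. Qed.

Lemma weight_two_spec :
  [/\ size weight_two = 32%N, uniq weight_two & all (fun x => lip_l1 x == 2%N) weight_two].
Proof. by split; [| rewrite filter_uniq ?undup_uniq |]. Qed.

Definition unit_of (a : nat) : lip := nth lip0 lip_units a.
Definition weight_two_of (a : nat) : lip := nth lip0 weight_two a.

Lemma nth_l1 (s : seq lip) w a : all (fun x => lip_l1 x == w) s -> (a < size s)%N ->
  lip_l1 (nth lip0 s a) = w.
Proof. by move=> /all_nthP l1_s lt_as; apply/eqP; apply: l1_s. Qed.

Lemma l1_unit_of a : (a < 8)%N -> lip_l1 (unit_of a) = 1%N.
Proof. by case: lip_units_spec => size_u _ l1_u; rewrite -size_u; apply: nth_l1. Qed.

Lemma l1_weight_two_of a : (a < 32)%N -> lip_l1 (weight_two_of a) = 2%N.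
Proof. by case: weight_two_spec => size_w _ l1_w; rewrite -size_w; apply: nth_l1. Qed.

Lemma unit_of_inj a b : (a < 8)%N -> (b < 8)%N -> unit_of a = unit_of b -> a = b.
Proof.
case: lip_units_spec => size_u uniq_u _ lt_a lt_b /eqP.
by rewrite nth_uniq ?size_u // => /eqP.
Qed.

Lemma weight_two_of_inj a b : (a < 32)%N -> (b < 32)%N ->
  weight_two_of a = weight_two_of b -> a = b.
Proof.
case: weight_two_spec => size_w uniq_w _ lt_a lt_b /eqP.
by rewrite nth_uniq ?size_w // => /eqP.
Qed.

Lemma l1_pos_neq0 x : (0 < lip_l1 x)%N -> x != lip0.
Proof. by apply: contraTneq => ->. Qed.

(* Indices of the two units placed at positions i and j (i <> j) by the
   parameter u < 32.  At the smaller position the unit is arbitrary (u %% 8);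
   at the larger one it is positive when i < j and negative when j < i
   (u %/ 8 < 4, shifted by 4 in the second case).  Thus the ordered pairs
   (i, j) and (j, i) together produce each of the 64 unit pairs on {i, j}
   exactly once. *)
Definition pair_units (i_before_j : bool) (u : nat) : nat * nat :=
  if i_before_j then (u %% 8, u %/ 8)%N else (u %/ 8 + 4, u %% 8)%N.

Lemma pair_units_lt b u : (u < 32)%N ->
  ((pair_units b u).1 < 8)%N /\ ((pair_units b u).2 < 8)%N.
Proof. by case: b => /= lt_u; split; lia. Qed.

Lemma unit_pair_inj b u u' : (u < 32)%N -> (u' < 32)%N ->
  unit_of (pair_units b u).1 = unit_of (pair_units b u').1 ->
  unit_of (pair_units b u).2 = unit_of (pair_units b u').2 -> u = u'.
Proof.
move=> lt_u lt_u'; have [[lt1 lt2] [lt1' lt2']] := (pair_units_lt b lt_u, pair_units_lt b lt_u').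
move=> /unit_of_inj-/(_ lt1 lt1') eq1 /unit_of_inj-/(_ lt2 lt2') eq2.
by case: b eq1 eq2 {lt1 lt2 lt1' lt2'} => /= *; lia.
Qed.

(* The orderings (i, j) and (j, i) never produce the same pair of units: at the
   larger position one is positive and the other negative. *)
Lemma unit_pair_swap b u u' : (u < 32)%N -> (u' < 32)%N ->
  unit_of (pair_units b u).1 = unit_of (pair_units (~~ b) u').2 ->
  unit_of (pair_units b u).2 <> unit_of (pair_units (~~ b) u').1.
Proof.
move=> lt_u lt_u'; have [[lt1 lt2] [lt1' lt2']] := (pair_units_lt b lt_u, pair_units_lt (~~ b) lt_u').
move=> /unit_of_inj-/(_ lt1 lt2') eq1 /unit_of_inj-/(_ lt2 lt1') eq2.
by case: b eq1 eq2 {lt1 lt2 lt1' lt2'} => /= *; lia.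
Qed.

Definition pattern_index (n : nat) := option ('I_n * 'I_n * 'I_32).

Definition pattern n (p : pattern_index n) : vec n := fun k =>
  if p is Some (i, j, u) then
    if i == j then (if k == i then weight_two_of u else lip0)
    else if k == i then unit_of (pair_units (i < j)%N u).1
    else if k == j then unit_of (pair_units (i < j)%N u).2
    else lip0
  else lip0.

Arguments pattern : simpl never.

Lemma card_pattern_index n : #|{: pattern_index n}| = (32 * n ^ 2 + 1)%N.
Proof. rewrite card_option !card_prod !card_ord; lia. Qed.

Section Patterns.
Variable n : nat.
Implicit Types (i j k : 'I_n) (u : 'I_32) (p q : pattern_index n).

Lemma pattern_diag i u : pattern (Some (i, i, u)) i = weight_two_of u.
Proof. by rewrite /pattern !eqxx. Qed.

Lemma pattern_at_i i j u : i != j ->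
  pattern (Some (i, j, u)) i = unit_of (pair_units (i < j)%N u).1.
Proof. by rewrite /pattern eqxx => /negbTE->. Qed.

Lemma pattern_at_j i j u : i != j ->
  pattern (Some (i, j, u)) j = unit_of (pair_units (i < j)%N u).2.
Proof. by rewrite /pattern eqxx eq_sym => /negbTE->. Qed.

Lemma pattern_out i j u k : k != i -> k != j -> pattern (Some (i, j, u)) k = lip0.
Proof. by rewrite /pattern => /negbTE-> /negbTE->; case: ifP. Qed.

Lemma pattern_support i j u k : pattern (Some (i, j, u)) k != lip0 -> k = i \/ k = j.
Proof.
have [-> _|ne_ki] := eqVneq k i; first by left.
have [-> _|ne_kj] := eqVneq k j; first by right.
by rewrite pattern_out ?eqxx.
Qed.

Lemma pattern_neq0_i i j u : pattern (Some (i, j, u)) i != lip0.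
Proof.
apply: l1_pos_neq0; have [<-|ne_ij] := eqVneq i j.
  by rewrite pattern_diag l1_weight_two_of.
by rewrite pattern_at_i // l1_unit_of //; case: (pair_units_lt (i < j)%N (ltn_ord u)).
Qed.

Lemma pattern_neq0_j i j u : pattern (Some (i, j, u)) j != lip0.
Proof.
have [<-|ne_ij] := eqVneq i j; first exact: pattern_neq0_i.
apply: l1_pos_neq0; rewrite pattern_at_j // l1_unit_of //.
by case: (pair_units_lt (i < j)%N (ltn_ord u)).
Qed.

Lemma pattern_l1 p k : (lip_l1 (pattern p k) <= 2)%N.
Proof.
case: p => [[[i j] u]|] //; have [lt1 lt2] := pair_units_lt (i < j)%N (ltn_ord u).
rewrite /pattern; case: eqP => _; first by case: eqP; rewrite ?l1_weight_two_of.
by case: eqP; last case: eqP; rewrite ?l1_unit_of.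
Qed.

Lemma pattern_l1_sum p : (\sum_k lip_l1 (pattern p k) <= 2)%N.
Proof.
case: p => [[[i j] u]|]; last by rewrite big1.
rewrite (bigD1 i) //=; have [<-|ne_ij] := eqVneq i j.
  rewrite big1 => [|k ne_ki]; last by rewrite pattern_out.
  by rewrite addn0 pattern_l1.
rewrite (bigD1 j) 1?eq_sym //= big1 => [|k /andP[ne_ki ne_kj]]; last first.
  by rewrite pattern_out.
have [lt1 lt2] := pair_units_lt (i < j)%N (ltn_ord u).
by rewrite /= addn0 pattern_at_i // pattern_at_j // !l1_unit_of.
Qed.

(* Distinct indices give distinct patterns: the support determines the
   positions up to order, and the values then determine the order and u. *)
Lemma pattern_inj p q : (forall k, pattern p k = pattern q k) -> p = q.
Proof.
case: p q => [[[i j] u]|] [[[i' j'] u']|] eq_pq //; last first.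
- by have := pattern_neq0_i i' j' u'; rewrite -eq_pq.
- by have := pattern_neq0_i i j u; rewrite eq_pq.
have in_q k : pattern (Some (i, j, u)) k != lip0 -> k = i' \/ k = j'.
  by rewrite eq_pq; apply: pattern_support.
have in_p k : pattern (Some (i', j', u')) k != lip0 -> k = i \/ k = j.
  by rewrite -eq_pq; apply: pattern_support.
have [lt_u lt_u'] := (ltn_ord u, ltn_ord u').
have [eq_ij|ne_ij] := eqVneq i j.
  subst j; have eq_i' : i' = i by case: (in_p _ (pattern_neq0_i i' j' u')).
  have eq_j' : j' = i by case: (in_p _ (pattern_neq0_j i' j' u')).
  subst i' j'; move: (eq_pq i); rewrite !pattern_diag => /weight_two_of_inj eq_u.
  by rewrite (val_inj (eq_u lt_u lt_u')).
have ne_ji : j != i by rewrite eq_sym.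
have [eq_i' | eq_j'] := in_q _ (pattern_neq0_i i j u); [subst i' | subst j'].
  have eq_j' : j' = j by case: (in_q _ (pattern_neq0_j i j u)) => // eq_ji; rewrite eq_ji eqxx in ne_ij.
  subst j'; move: (eq_pq i) (eq_pq j); rewrite !pattern_at_i // !pattern_at_j //.
  by move=> /unit_pair_inj-/(_ lt_u lt_u') eq_u /eq_u /val_inj->.
have eq_i' : i' = j by case: (in_q _ (pattern_neq0_j i j u)) => // eq_ji; rewrite eq_ji eqxx in ne_ij.
subst i'; have flip_ji : (j < i)%N = ~~ (i < j)%N.
  by case: ltngtP => // /val_inj eq_ij; rewrite eq_ij eqxx in ne_ij.
move: (eq_pq i) (eq_pq j); rewrite (pattern_at_i u ne_ij) (pattern_at_j u ne_ij).
rewrite (pattern_at_i u' ne_ji) (pattern_at_j u' ne_ji) flip_ji.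
by move=> eq1 /(unit_pair_swap lt_u lt_u' eq1).
Qed.
End Patterns.

Lemma pattern_weight pi n (p : pattern_index n) : norm_7_or_11 pi ->
  vweight_le pi (pattern p) 2.
Proof.
move=> norm_pi; exists (fun k => lip_l1 (pattern p k)); split; last exact: pattern_l1_sum.
by move=> k; apply: class_weight_small; rewrite ?pattern_l1.
Qed.

Lemma pattern_congr_inj pi n (p q : pattern_index n) : norm_7_or_11 pi ->
  vcongr pi (pattern p) (pattern q) -> p = q.
Proof.
move=> norm_pi congr_pq; apply: pattern_inj => k.
apply: rcongr_small_eq norm_pi (congr_pq k) _.
by rewrite -[4%N]/(2 + 2)%N leq_add ?pattern_l1.
Qed.

Lemma lipschitz_bound pi Npi n k (C : vec n -> Prop) : norm_7_or_11 pi ->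
  linear_code pi Npi k C -> corrects pi C 2 ->
  (32 * n ^ 2 + 1 <= (Npi ^ 2) ^ (n - k))%N.
Proof.
move=> norm_pi code_C corr_C; rewrite -card_pattern_index.
apply: packing_bound code_C corr_C _ _ => [p | p q]; first exact: pattern_weight.
exact: pattern_congr_inj.
Qed.

Theorem theorem9 :
  (forall (n k : nat) (C : vec n -> Prop),
      (k <= n)%N -> linear_code pi7 7 k C -> corrects pi7 C 2 ->
      (32 * n ^ 2 + 1 <= (7 ^ 2) ^ (n - k))%N) /\
  (forall (n k : nat) (C : vec n -> Prop),
      (k <= n)%N -> linear_code pi11 11 k C -> corrects pi11 C 2 ->
      (32 * n ^ 2 + 1 <= (11 ^ 2) ^ (n - k))%N).
Proof.
by split=> n k C _; apply: lipschitz_bound; [left | right].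
Qed.
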